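(* Let $F=\breve F(\alpha_1,\dots,\alpha_t)$ be a fence with shared elements $s_1,\dots,s_{t-1}$. Then $Y=\{\hat\chi_{s_i}: i\in[t-1]\}$ is linearly independent and $\operatorname{Span}_{\mathbb R}(Y)\cap I_T(F)=\{0\}$.
   Context: Fences: let $\alpha=(\alpha_1,\dots,\alpha_t)$ be positive integers with $t\ge2$ and $\alpha_1,\alpha_t\ge2$. Put $a_0=0$, $a_i=\alpha_1+\dots+\alpha_i$, $n=a_t-1$. The fence $\breve F(\alpha)$ is the poset on $\{x_1,\dots,x_n\}$ whose cover relations are: for $1\le j\le n-1$ with $a_{i-1}\le j<a_i$, $x_j\lessdot x_{j+1}$ if $i$ is odd and $x_j\gtrdot x_{j+1}$ if $i$ is even. Shared elements are $s_i=x_{a_i}$, $i\in[t-1]$. $\mathcal J(F)$ is the set of order ideals. For $q\in F$, $I\in\mathcal J(F)$: $\hat\chi_q(I)=1$ if $q\in I$, else $0$; $T_q(I)=1$ if $q\in\min(F\setminus I)$, $-1$ if $q\in\max(I)$, $0$ otherwise. $f\equiv\text{const}$ means $f=c+\sum_{q\in F}c_qT_q$ for real constants $c,c_q$. The order ideal toggleability space is $I_T(F)=\{f\in\operatorname{Span}_{\mathbb R}\{\hat\chi_q:q\in F\}: f\equiv\text{const}\}$. *)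

From HB Require Import structures.
From mathcomp Require Import all_boot all_order all_algebra.
From mathcomp Require Import reals.
Unset Printing Implicit Defensive.
Import Order.TTheory GRing.Theory Num.Theory.
Local Open Scope ring_scope.

(* A composition alpha = (alpha_1,...,alpha_t) is a seq nat of size t.
   a_i = alpha_1 + ... + alpha_i (a_0 = 0).  n = a_t - 1.
   Element x_j (1 <= j <= n) is the ordinal j-1 : 'I_n. *)
Definition fa (alpha : seq nat) (i : nat) : nat := sumn (take i alpha).
Definition fn (alpha : seq nat) : nat := (sumn alpha).-1.

(* For 1 <= j <= n-1 with a_{i-1} <= j < a_i (i in [t]):
   x_j ⋖ x_{j+1} if i odd,  x_j ⋗ x_{j+1} if i even.
   Below the block index i is written (k+1) with k : 'I_t, so i odd <-> k even. *)
Definition cov (alpha : seq nat) : rel 'I_(fn alpha) := fun x y =>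
  (* x = x_j, y = x_{j+1}, j = val x + 1, block i odd *)
  [exists k : 'I_(size alpha),
     [&& (fa alpha k <= (val x).+1)%N, ((val x).+1 < fa alpha k.+1)%N,
         val y == (val x).+1 & ~~ odd k]]
  ||
  (* y = x_j, x = x_{j+1}, j = val y + 1, block i even *)
  [exists k : 'I_(size alpha),
     [&& (fa alpha k <= (val y).+1)%N, ((val y).+1 < fa alpha k.+1)%N,
         val x == (val y).+1 & odd k]].

Definition fle (alpha : seq nat) : rel 'I_(fn alpha) := connect (cov alpha).

Definition is_ideal (alpha : seq nat) (I : {set 'I_(fn alpha)}) : bool :=
  [forall x, forall y, (fle alpha x y && (y \in I)) ==> (x \in I)].

Definition JF (alpha : seq nat) := {I : {set 'I_(fn alpha)} | is_ideal alpha I}.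

Definition chi (R : numDomainType) (alpha : seq nat) (q : 'I_(fn alpha))
  (I : JF alpha) : R := if q \in val I then 1 else 0.

Definition in_min_compl (alpha : seq nat) (I : {set 'I_(fn alpha)}) q : bool :=
  (q \notin I) && [forall p, (fle alpha p q && (p != q)) ==> (p \in I)].

Definition in_max (alpha : seq nat) (I : {set 'I_(fn alpha)}) q : bool :=
  (q \in I) && [forall p, (fle alpha q p && (p != q)) ==> (p \notin I)].

Definition togT (R : numDomainType) (alpha : seq nat) (q : 'I_(fn alpha))
  (I : JF alpha) : R :=
  if in_min_compl alpha (val I) q then 1
  else if in_max alpha (val I) q then -1 else 0.

Definition toggconst (R : numDomainType) (alpha : seq nat) (f : JF alpha -> R) : Prop :=
  exists (c : R) (cq : 'I_(fn alpha) -> R),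
    forall I, f I = c + \sum_(q : 'I_(fn alpha)) cq q * togT R alpha q I.

Definition in_span_chi (R : numDomainType) (alpha : seq nat) (f : JF alpha -> R) : Prop :=
  exists d : 'I_(fn alpha) -> R,
    forall I, f I = \sum_(q : 'I_(fn alpha)) d q * chi R alpha q I.

Definition in_IT (R : numDomainType) (alpha : seq nat) (f : JF alpha -> R) : Prop :=
  in_span_chi R alpha f /\ toggconst R alpha f.

(* hat chi_{s_i} for the shared element s_i = x_{a_i}, i.e. the element of
   'I_n with value a_i - 1 (for i in [t-1] this is < n since alpha_t >= 2). *)
Definition chi_shared (R : numDomainType) (alpha : seq nat) (i : nat)
  (I : JF alpha) : R :=
  if [exists q in val I, val q == (fa alpha i).-1] then 1 else 0.

(* Write f(I) = sum_(q in I) d_q, with d supported on the shared elements, and suppose that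
   f = c + sum_q c_q T_q on order ideals.  Adding an addable element p to an ideal changes f by
   d_p, while the toggles change by -2 at p, by an amount in [0, 1] at the cover-neighbours of p
   and not at all elsewhere; hence 2|c_p| <= |c_(p-1)| + |c_(p+1)| when p is not shared.
   A shared element s is a peak or a valley of the fence, and its neighbours s-1 and s+1 are
   incomparable.  Adding both of them to the largest ideal avoiding them, f has second
   difference 0 while the toggles have second difference +-1 at s and 0 elsewhere, so c_s = 0.
   A discrete maximum principle then forces every c_q to vanish, and the empty ideal gives c = 0.
   Independence of the chi_(s_i) is the case f = 0: adding s to its strict down-set changes f
   by d_s. *)

From mathcomp Require Import all_boot all_order all_algebra.
From mathcomp Require Import reals.
From mathcomp Require Import zify ring lra.
Import Order.TTheory GRing.Theory Num.Theory.
Local Open Scope ring_scope.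

Set Implicit Arguments.
Unset Strict Implicit.
Unset Printing Implicit Defensive.

Section LowerSets.
Variables (T : finType) (e : rel T).

Definition lower_set (I : {set T}) :=
  [forall x, forall y, (connect e x y && (y \in I)) ==> (x \in I)].
Definition adjacent x y := e x y || e y x.
Definition addable (I : {set T}) q := (q \notin I) && [forall r, e r q ==> (r \in I)].
Definition removable (I : {set T}) q := (q \in I) && [forall r, e q r ==> (r \notin I)].
Definition strict_down p := [set x | connect e x p & x != p].
Definition not_above a b := [set x | ~~ connect e a x & ~~ connect e b x].

Lemma connect_exit (P : pred T) x y : connect e x y -> P x -> ~~ P y ->
  exists u v, [/\ connect e x u, e u v, connect e v y, P u & ~~ P v].
Proof.
move=> /connectP[p]; elim: p x => [|z p IH] x /=; first by move=> _ -> ->.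
case/andP=> exz pz yl Px nPy; have zy : connect e z y by apply/connectP; exists p.
have [Pz|nPz] := boolP (P z); last by exists x, z; rewrite connect0.
have [u [v [zu uv vy Pu nPv]]] := IH z pz yl Pz nPy.
by exists u, v; split=> //; apply: connect_trans (connect1 exz) zu.
Qed.

Lemma lower_set_connect I x y : lower_set I -> connect e x y -> y \in I -> x \in I.
Proof. by move=> /forallP/(_ x)/forallP/(_ y)/implyP lI xy yI; rewrite lI ?xy. Qed.

Lemma lower_setP (I : {set T}) : reflect (forall x y, e x y -> y \in I -> x \in I) (lower_set I).
Proof.
apply: (iffP idP) => [lI x y /connect1 | lI]; first exact: lower_set_connect.
apply/forallP => x; apply/forallP => y; apply/implyP => /andP[xy yI].
apply/negPn/negP => xI; have nnyI : ~~ (y \notin I) by rewrite negbK.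
have [u [v [_ uv _ uI /negbNE vI]]] := connect_exit (P := [pred z | z \notin I]) xy xI nnyI.
by move: uI; rewrite /= (lI u v uv vI).
Qed.

Lemma lower_setU1 I p : lower_set I -> addable I p -> lower_set (p |: I).
Proof.
move=> /lower_setP lI /andP[_ /forallP lowp]; apply/lower_setP => x y exy; rewrite !in_setU1.
case/orP=> [/eqP eyp | yI]; last by rewrite (lI x y exy yI) orbT.
by rewrite -eyp in lowp; rewrite (implyP (lowp x) exy) orbT.
Qed.

Lemma addableU1 I a b : addable I a -> addable I b -> a != b -> addable (a |: I) b.
Proof.
move=> /andP[aI _] /andP[bI /forallP lowb] ab; rewrite /addable in_setU1 eq_sym (negbTE ab) bI.
by apply/forallP => r; apply/implyP => erb; rewrite in_setU1 (implyP (lowb r) erb) orbT.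
Qed.

Lemma lower_set_not_above a b : lower_set (not_above a b).
Proof.
apply/lower_setP => x y exy; rewrite !inE => /andP[ay by_].
by apply/andP; split; [apply: contra ay | apply: contra by_] => /connect_trans; apply;
  exact: connect1.
Qed.

Lemma not_aboveC a b : not_above a b = not_above b a.
Proof. by apply/setP => x; rewrite !inE andbC. Qed.

Hypothesis e_acyclic : forall x y, e x y -> ~~ connect e y x.

Lemma e_irrefl x y : e x y -> x != y.
Proof. by move=> exy; apply: contraTneq (e_acyclic exy) => ->; rewrite negbK connect0. Qed.

Lemma addable_connectE I q : lower_set I ->
  (q \notin I) && [forall p, (connect e p q && (p != q)) ==> (p \in I)] = addable I q.
Proof.
move=> lI; rewrite /addable; case: (q \in I) => //=.
apply/forallP/forallP => H r; apply/implyP.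
  by move=> erq; apply: (implyP (H r)); rewrite connect1 // e_irrefl.
move=> /andP[rq neq]; have nnqq : ~~ (q != q) by rewrite eqxx.
have [u [v [ru uv _ _ /negbNE/eqP vq]]] := connect_exit (P := [pred z | z != q]) rq neq nnqq.
by rewrite vq in uv; apply: lower_set_connect lI ru (implyP (H u) uv).
Qed.

Lemma removable_connectE I q : lower_set I ->
  (q \in I) && [forall p, (connect e q p && (p != q)) ==> (p \notin I)] = removable I q.
Proof.
move=> lI; rewrite /removable; case: (q \in I) => //=.
apply/forallP/forallP => H r; apply/implyP.
  by move=> eqr; apply: (implyP (H r)); rewrite connect1 // eq_sym e_irrefl.
move=> /andP[qr neq]; have qq : q == q by [].
have [u [v [_ uv vr /eqP uq]]] := connect_exit (P := [pred z | z == q]) qr qq neq.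
rewrite uq in uv => _; apply: contraNN (implyP (H v) uv).
exact: lower_set_connect vr.
Qed.

Lemma lower_set_strict_down p : lower_set (strict_down p).
Proof.
apply/lower_setP => x y exy; rewrite !inE => /andP[yp _]; rewrite (connect_trans (connect1 exy) yp).
by apply: contraTneq (e_acyclic exy) => ->; rewrite negbK.
Qed.

Lemma addable_strict_down p : addable (strict_down p) p.
Proof.
rewrite /addable inE eqxx andbF; apply/forallP => r; apply/implyP => erp.
by rewrite inE connect1 // e_irrefl.
Qed.

Lemma addable_not_above a b : ~~ connect e b a -> addable (not_above a b) a.
Proof.
move=> nba; rewrite /addable inE connect0; apply/forallP => r; apply/implyP => era.
rewrite inE; apply/andP; split; first exact: e_acyclic era.
by apply: contra nba => /connect_trans; apply; exact: connect1.
Qed.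

Lemma additive_eq0_on_lower_sets (V : nmodType) (d : T -> V) :
  (forall I, lower_set I -> \sum_(q in I) d q = 0) -> forall p, d p = 0.
Proof.
move=> vanish p; have /andP[pD _] := addable_strict_down p.
have := vanish _ (lower_setU1 (lower_set_strict_down p) (addable_strict_down p)).
by rewrite big_setU1 //= vanish ?addr0 //; exact: lower_set_strict_down.
Qed.

End LowerSets.

Section Toggles.
Context {R : numDomainType}.
Variables (T : finType) (e : rel T).
Hypothesis e_acyclic : forall x y, e x y -> ~~ connect e y x.
Local Notation lower_set := (lower_set e).
Local Notation addable := (addable e).
Local Notation removable := (removable e).
Local Notation adjacent := (adjacent e).

Definition toggle (I : {set T}) q : R :=
  if addable I q then 1 else if removable I q then -1 else 0.

Definition toggle_diff2 I a b q :=
  toggle I q - toggle (a |: I) q - toggle (b |: I) q + toggle (b |: (a |: I)) q.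

Lemma toggle_addable I p : addable I p -> toggle I p = 1.
Proof. by rewrite /toggle => ->. Qed.

Lemma toggle_removable I p : removable I p -> toggle I p = -1.
Proof. by rewrite /toggle /addable => /[dup] /andP[-> _] ->. Qed.

Lemma toggle_added I p : lower_set I -> addable I p -> toggle (p |: I) p = -1.
Proof.
move=> /lower_setP lI /andP[pI _]; apply: toggle_removable; rewrite /removable setU11.
apply/forallP => r; apply/implyP => epr; rewrite in_setU1 eq_sym (negbTE (e_irrefl e_acyclic epr)).
by apply: contra pI; exact: lI.
Qed.

Lemma toggle_setU1_nonadjacent I p x :
  x != p -> ~~ adjacent p x -> toggle (p |: I) x = toggle I x.
Proof.
rewrite /adjacent negb_or => xp /andP[npx nxp].
rewrite /toggle /addable /removable in_setU1 (negbTE xp) /=.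
have -> : [forall r, e r x ==> (r \in p |: I)] = [forall r, e r x ==> (r \in I)].
  by apply: eq_forallb => r; rewrite in_setU1; case: eqVneq => // ->; rewrite (negbTE npx).
have -> : [forall r, e x r ==> (r \notin p |: I)] = [forall r, e x r ==> (r \notin I)].
  by apply: eq_forallb => r; rewrite in_setU1; case: eqVneq => // ->; rewrite (negbTE nxp).
by [].
Qed.

Lemma toggle_above_addable I p x : lower_set I -> addable I p -> e p x -> toggle I x = 0.
Proof.
move=> /lower_setP lI /andP[pI _] epx; have xI : x \notin I by apply: contra pI; exact: lI.
rewrite /toggle /addable /removable (negbTE xI) /=.
by case: forallP => // /(_ p); rewrite epx (negbTE pI).
Qed.

Lemma toggle_setU1_below I p x : addable I p -> e x p -> toggle (p |: I) x = 0.
Proof.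
move=> /andP[_ /forallP lowp] exp; have xI := implyP (lowp x) exp.
rewrite /toggle /addable /removable in_setU1 xI orbT /=.
by case: forallP => // /(_ p); rewrite exp setU11.
Qed.

Lemma toggle_setU1_adjacent I p x : lower_set I -> addable I p -> x != p -> adjacent p x ->
  0 <= toggle (p |: I) x - toggle I x <= 1.
Proof.
move=> lI Ip xp /orP[epx | exp].
  have xI : x \notin p |: I.
    rewrite in_setU1 (negbTE xp); case/andP: Ip => pI _.
    by apply: contra pI; apply: lower_set_connect lI (connect1 epx).
  rewrite (toggle_above_addable lI Ip epx) subr0 /toggle /removable (negbTE xI) /=.
  by case: ifP; rewrite ?lexx ?ler01.
have xI : x \in I by case/andP: Ip => _ /forallP/(_ x)/implyP; apply.
rewrite (toggle_setU1_below Ip exp) sub0r /toggle /addable xI /=.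
by case: ifP; rewrite ?opprK ?oppr0 ?lexx ?ler01.
Qed.

Lemma toggle_diff2C I a b q : toggle_diff2 I a b q = toggle_diff2 I b a q.
Proof. by rewrite /toggle_diff2 setUCA; congr (_ + _); rewrite addrAC. Qed.

Lemma toggle_diff2_eq0 I a b q : q != b -> ~~ adjacent b q -> toggle_diff2 I a b q = 0.
Proof.
move=> qb nbq; rewrite /toggle_diff2 !(toggle_setU1_nonadjacent _ qb nbq).
by rewrite addrAC subrK subrr.
Qed.

Lemma toggle_diff2_peak I a b s : lower_set I -> addable I a -> addable I b -> a != b ->
  e a s -> e b s -> (forall r, e r s -> r = a \/ r = b) -> toggle_diff2 I a b s = 1.
Proof.
move=> lI Ia Ib ab eas ebs low_s; have Iab := addableU1 Ia Ib ab.
have Iba : addable (b |: I) a by apply: addableU1; rewrite // eq_sym.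
rewrite /toggle_diff2 (toggle_above_addable lI Ia eas).
rewrite (toggle_above_addable (lower_setU1 lI Ia) Iab ebs).
rewrite (toggle_above_addable (lower_setU1 lI Ib) Iba eas) !subr0 add0r.
apply: toggle_addable; apply/andP; split.
  rewrite !in_setU1 eq_sym (negbTE (e_irrefl e_acyclic ebs)).
  rewrite eq_sym (negbTE (e_irrefl e_acyclic eas)) /=.
  by case/andP: Ia => aI _; apply: contra aI; apply: lower_set_connect lI (connect1 eas).
apply/forallP => r; apply/implyP => /low_s[] ->; by rewrite !in_setU1 eqxx ?orbT.
Qed.

Lemma toggle_diff2_valley I a b s : lower_set I -> addable I a -> addable I b -> a != b ->
  e s a -> e s b -> (forall r, e s r -> r = a \/ r = b) -> toggle_diff2 I a b s = -1.
Proof.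
move=> lI Ia Ib ab esa esb up_s; have Iab := addableU1 Ia Ib ab.
rewrite /toggle_diff2 (toggle_setU1_below Ia esa) (toggle_setU1_below Ib esb).
rewrite (toggle_setU1_below Iab esb) !subr0 addr0; apply: toggle_removable.
case/andP: Ia Ib => aI /forallP low_a /andP[bI _].
rewrite /removable (implyP (low_a s) esa).
by apply/forallP => r; apply/implyP => /up_s[] ->.
Qed.

End Toggles.

Section Toggleable.
Variables (R : numDomainType) (T : finType) (e : rel T).
Hypothesis e_acyclic : forall x y, e x y -> ~~ connect e y x.
Variables (d : T -> R) (c : R) (cq : T -> R).
Hypothesis toggleable :
  forall I, lower_set e I -> \sum_(q in I) d q = c + \sum_q cq q * toggle e I q.

Lemma toggleable_jump I p : lower_set e I -> addable e I p ->
  d p = \sum_q cq q * (toggle e (p |: I) q - toggle e I q).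
Proof.
move=> lI Ip; have /andP[pI _] := Ip.
have := toggleable (lower_setU1 lI Ip); rewrite big_setU1 //= toggleable //.
move/(canRL (addrK _)); rewrite opprD addrACA subrr add0r -sumrB => ->.
by apply: eq_bigr => q _; rewrite mulrBr.
Qed.

Lemma toggleable_diff2 I a b : lower_set e I -> addable e I a -> addable e I b -> a != b ->
  \sum_q cq q * toggle_diff2 e I a b q = 0.
Proof.
move=> lI Ia Ib ab; transitivity (d b - d b); last exact: subrr.
rewrite {1}(toggleable_jump (lower_setU1 lI Ia) (addableU1 Ia Ib ab)) (toggleable_jump lI Ib).
rewrite -sumrB; apply: eq_bigr => q _; rewrite -mulrBr /toggle_diff2; congr (_ * _).
by ring.
Qed.

Lemma toggleable_coeff_le p : d p = 0 -> 2 * `|cq p| <= \sum_(q | adjacent e p q) `|cq q|.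
Proof.
have [lD Dp] := (lower_set_strict_down e_acyclic p, addable_strict_down e_acyclic p).
rewrite (toggleable_jump lD Dp) (bigD1 p) //= (toggle_added e_acyclic lD Dp).
rewrite (toggle_addable Dp); set S := \sum_(q | q != p) _.
move=> /eqP; rewrite addrC addr_eq0 => /eqP S_eq.
have -> : 2 * `|cq p| = `|S|.
  by rewrite S_eq normrN normrM -opprD normrN [`|1 + 1|]ger0_norm ?addr_ge0 ?ler01 // mulrC.
apply: le_trans (ler_norm_sum _ _ _) _.
rewrite big_mkcond [leRHS]big_mkcond /=; apply: ler_sum => q _.
case: eqVneq => [-> | qp] /=; first by case: ifP.
case: ifPn => adj; last by rewrite toggle_setU1_nonadjacent // subrr mulr0 normr0.
have /andP[D0 D1] := toggle_setU1_adjacent (R := R) lD Dp qp adj.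
by rewrite normrM (ger0_norm D0) ler_piMr.
Qed.

End Toggleable.

Lemma subharmonic_max_eq0 (R : realDomainType) (h : nat -> R) (m : nat) :
  h 0%N = 0 -> (forall k, h k <= h m) ->
  (forall k, h k.+1 = 0 \/ 2 * h k.+1 <= h k + h k.+2) -> h m = 0.
Proof.
move=> h0 hmax hsub; have hm_ge0 : 0 <= h m by rewrite -h0.
apply/eqP; rewrite eq_le hm_ge0 andbT leNgt; apply/negP => hm_gt0.
suff lt_hm k : h k < h m by have := lt_hm m; rewrite ltxx.
elim: k => [|k IH]; first by rewrite h0.
by have [->|] := hsub k; last have := hmax k.+2; lra.
Qed.

Section Fence.
Variable alpha : seq nat.
Local Notation t := (size alpha).
Local Notation n := (fn alpha).
Local Notation T := 'I_(fn alpha).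
Local Notation cov := (cov alpha).

Lemma fa_mono i j : (i <= j)%N -> (fa alpha i <= fa alpha j)%N.
Proof. by move=> le_ij; rewrite /fa -(subnKC le_ij) takeD sumn_cat leq_addr. Qed.

Lemma fa_succ k : (k < t)%N -> fa alpha k.+1 = (fa alpha k + nth 0%N alpha k)%N.
Proof. by move=> kt; rewrite /fa (take_nth 0%N kt) sumn_rcons. Qed.

Lemma fa_block_unique k1 k2 j : (fa alpha k1 <= j)%N -> (j < fa alpha k1.+1)%N ->
  (fa alpha k2 <= j)%N -> (j < fa alpha k2.+1)%N -> k1 = k2.
Proof. by move=> l1 u1 l2 u2; case: (ltngtP k1 k2) => // lt; have := fa_mono lt; lia.
Qed.

Lemma cov_up (k : 'I_t) (x y : T) : (fa alpha k <= x.+1 < fa alpha k.+1)%N ->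
  y = x.+1 :> nat -> ~~ odd k -> cov x y.
Proof.
by move=> /andP[lk uk] yx ok; apply/orP; left; apply/existsP; exists k; rewrite /= lk uk yx eqxx.
Qed.

Lemma cov_down (k : 'I_t) (x y : T) : (fa alpha k <= x.+1 < fa alpha k.+1)%N ->
  y = x.+1 :> nat -> odd k -> cov y x.
Proof.
by move=> /andP[lk uk] yx ok; apply/orP; right; apply/existsP; exists k; rewrite /= lk uk yx eqxx.
Qed.

Lemma cov_adjacent (x y : T) : cov x y -> y = x.+1 :> nat \/ x = y.+1 :> nat.
Proof. by case/orP=> /existsP[k /and4P[_ _ /eqP-> _]]; [left|right]. Qed.

Lemma cov_asym (x y : T) : cov x y -> ~~ cov y x.
Proof.
case/orP=> /existsP[k /and4P[lk uk /eqP Ek ok]]; apply/negP;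
  case/orP=> /existsP[k' /and4P[lk' uk' /eqP Ek' ok']]; try by move: Ek Ek'; lia.
  by move: ok; rewrite (fa_block_unique lk uk lk' uk') ok'.
by move: ok'; rewrite (fa_block_unique lk' uk' lk uk) ok.
Qed.

Lemma adjacent_dist (x y : T) :
  (y == x) || adjacent cov x y -> (x <= y.+1)%N /\ (y <= x.+1)%N.
Proof. by case/orP=> [/eqP-> | /orP[] /cov_adjacent[]]; lia. Qed.

Lemma cov_crosses_up (x y u v : T) : connect cov x y ->
  (x <= u)%N -> (u < y)%N -> v = u.+1 :> nat -> cov u v.
Proof.
move=> xy xu uy vu; have nyu : ~~ (y <= u)%N by rewrite -ltnNge.
have [u' [v' [_ cuv _ /= u'u]]] :=
  connect_exit (P := [pred z : T | (z <= u)%N]) xy xu nyu.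
rewrite -ltnNge => uv'; have [Ev|Eu] := cov_adjacent cuv; last by lia.
by have [-> ->] : u = u' /\ v = v' by split; apply: ord_inj; lia.
Qed.

Lemma cov_crosses_down (x y u v : T) : connect cov x y ->
  (y <= u)%N -> (u < x)%N -> v = u.+1 :> nat -> cov v u.
Proof.
move=> xy yu ux vu; have nyu : ~~ (u < y)%N by rewrite -leqNgt.
have [u' [v' [_ cuv _ /= uu' /negbTE]]] :=
  connect_exit (P := [pred z : T | (u < z)%N]) xy ux nyu.
rewrite ltnNge => /negbFE v'u; have [Ev|Eu] := cov_adjacent cuv; first by lia.
by have [-> ->] : v = u' /\ u = v' by split; apply: ord_inj; lia.
Qed.

Lemma cov_acyclic (x y : T) : cov x y -> ~~ connect cov y x.
Proof.
move=> cxy; apply/negP => yx; suff : cov y x by apply/negP: (cov_asym cxy).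
have [E|E] := cov_adjacent cxy.
  by apply: (cov_crosses_down yx (leqnn _) _ E); rewrite E.
by apply: (cov_crosses_up yx (leqnn _) _ E); rewrite E.
Qed.

Definition turn (a s b : T) := (cov a s && cov b s) || (cov s a && cov s b).

Lemma adjacent_pred_succ (a s b r : T) :
  s = a.+1 :> nat -> b = s.+1 :> nat -> adjacent cov s r -> r = a \/ r = b.
Proof. by move=> sa bs /orP[] /cov_adjacent[] E; [right|left|left|right]; apply: ord_inj; lia. Qed.

Lemma turn_incomparable (a s b : T) : s = a.+1 :> nat -> b = s.+1 :> nat -> turn a s b ->
  ~~ connect cov a b /\ ~~ connect cov b a.
Proof.
move=> sa bs turn_s; have no_2cycle x y : cov x y -> cov y x -> False by move=> /cov_asym/negP.
split; apply/negP => conn.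
  have cas : cov a s by apply: (cov_crosses_up conn _ _ sa); lia.
  have csb : cov s b by apply: (cov_crosses_up conn _ _ bs); lia.
  by case/orP: turn_s => /andP[h1 h2]; [apply: no_2cycle csb h2 | apply: no_2cycle cas h1].
have csa : cov s a by apply: (cov_crosses_down conn _ _ sa); lia.
have cbs : cov b s by apply: (cov_crosses_down conn _ _ bs); lia.
by case/orP: turn_s => /andP[h1 h2]; [apply: no_2cycle csa h1 | apply: no_2cycle cbs h2].
Qed.

Lemma togT_toggle (R : numDomainType) (I : JF alpha) q : togT R alpha q I = toggle cov (val I) q.
Proof.
rewrite /togT /in_min_compl /in_max /fle.
by rewrite (addable_connectE cov_acyclic _ (valP I)) (removable_connectE cov_acyclic _ (valP I)).
Qed.

(* [shared i] is the index of s_(i+1) = x_(a_(i+1)) in ['I_n]; the point x_j has index j - 1. *)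
Definition shared i := (fa alpha i.+1).-1.

Definition shared_weight (V : nmodType) (b : 'I_t.-1 -> V) (q : T) : V :=
  \sum_(i < t.-1 | q == shared i :> nat) b i.

Lemma sum_chi_shared (R : numDomainType) (b : 'I_t.-1 -> R) (I : JF alpha) :
  \sum_(i < t.-1) b i * chi_shared R alpha i.+1 I = \sum_(q in val I) shared_weight b q.
Proof.
under [RHS]eq_bigr do rewrite /shared_weight big_mkcond.
rewrite exchange_big; apply: eq_bigr => i _ /=; rewrite /chi_shared.
case: exists_inP => [[q qI /eqP Eq] | none]; last first.
  by rewrite mulr0 big1 // => q qI; case: eqP => // Eq; case: none; exists q => //; apply/eqP.
have Eq' : q = shared i :> nat := Eq.
rewrite mulr1 (bigD1 q) //= Eq' eqxx big1 ?addr0 // => r /andP[_ rq].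
by case: eqP => // Er; case/eqP: rq; apply: ord_inj; rewrite Er Eq'.
Qed.

Section Shared.
Hypothesis Ht : (2 <= t)%N.
Hypothesis Hpos : all (fun k => 0 < k)%N alpha.
Hypothesis Hfirst : (2 <= head 0 alpha)%N.
Hypothesis Hlast : (2 <= last 0 alpha)%N.

Lemma fa_ltS k : (k < t)%N -> (fa alpha k < fa alpha k.+1)%N.
Proof. by move=> kt; rewrite fa_succ //; have := (all_nthP 0%N Hpos) k kt; lia. Qed.

Lemma shared_bounds i : (i < t.-1)%N -> (0 < shared i)%N /\ ((shared i).+1 < n)%N.
Proof.
move=> it; have fa1 : fa alpha 1 = head 0%N alpha by rewrite fa_succ ?nth0 /fa ?take0 //; lia.
have fa_last : (fa alpha t.-1 + last 0%N alpha)%N = sumn alpha.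
  by rewrite -nth_last -fa_succ ?prednK /fa ?take_size //; lia.
have := @fa_mono 1 i.+1 isT; have := @fa_mono i.+1 t.-1 it.
rewrite /shared /fn; lia.
Qed.

Lemma shared_inj i j : (i < t.-1)%N -> (j < t.-1)%N -> shared i = shared j -> i = j.
Proof.
move=> it jt; have [si_gt0 _] := shared_bounds it; have [sj_gt0 _] := shared_bounds jt.
move: si_gt0 sj_gt0; rewrite /shared.
case: (ltngtP i j) => // [ij | ji].
  have iS : (i.+1 < t)%N by lia.
  by have := fa_ltS iS; have := @fa_mono i.+2 j.+1 ij; lia.
have jS : (j.+1 < t)%N by lia.
by have := fa_ltS jS; have := @fa_mono j.+2 i.+1 ji; lia.
Qed.

Lemma shared_turn i (a s b : T) : (i < t.-1)%N -> s = shared i :> nat ->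
  s = a.+1 :> nat -> b = s.+1 :> nat -> turn a s b.
Proof.
move=> it Es Ea Eb; have [s_gt0 _] := shared_bounds it.
have ki : (i < t)%N by lia.
have ki1 : (i.+1 < t)%N by lia.
have := fa_ltS ki; have := fa_ltS ki1; rewrite /shared in Es => lo hi.
have blk_a : (fa alpha (Ordinal ki) <= a.+1 < fa alpha (Ordinal ki).+1)%N by rewrite /=; lia.
have blk_s : (fa alpha (Ordinal ki1) <= s.+1 < fa alpha (Ordinal ki1).+1)%N by rewrite /=; lia.
rewrite /turn; have [oi | ei] := boolP (odd i).
  by rewrite (cov_down blk_a Ea) ?(cov_up blk_s Eb) /= ?negbK ?orbT.
by rewrite (cov_up blk_a Ea) ?(cov_down blk_s Eb).
Qed.

Lemma shared_weight_shared (V : nmodType) (b : 'I_t.-1 -> V) (i : 'I_t.-1) (s : T) :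
  s = shared i :> nat -> shared_weight b s = b i.
Proof.
move=> Es; rewrite /shared_weight (big_pred1 i) // => j /=; rewrite Es.
apply/eqP/eqP => [E | -> //]; apply: val_inj.
exact: shared_inj (ltn_ord j) (ltn_ord i) (esym E).
Qed.

Lemma shared_weight_eq0 (V : nmodType) (b : 'I_t.-1 -> V) (p : T) :
  (forall i, (i < t.-1)%N -> p != shared i :> nat) -> shared_weight b p = 0.
Proof. by move=> nsh; rewrite /shared_weight big_pred0 // => i; apply/negbTE/nsh. Qed.

Section FenceToggleable.
Variables (R : realDomainType) (d : T -> R) (c : R) (cq : T -> R).
Hypothesis toggleable :
  forall I, lower_set cov I -> \sum_(q in I) d q = c + \sum_q cq q * toggle cov I q.

Lemma toggleable_coeff_shared i (s : T) : (i < t.-1)%N -> s = shared i :> nat -> cq s = 0.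
Proof.
move=> it Es; have [s_gt0 s_lt] := shared_bounds it; rewrite -Es in s_gt0 s_lt.
have a_lt : (s.-1 < n)%N by lia.
pose a : T := Ordinal a_lt; pose b : T := Ordinal s_lt.
have sa : s = a.+1 :> nat by rewrite /= prednK.
have bs : b = s.+1 :> nat by [].
have turn_s := shared_turn it Es sa bs.
have [nab nba] := turn_incomparable sa bs turn_s.
have ab : a != b by apply/eqP => /(congr1 val) /=; lia.
pose I := not_above cov a b; have lI : lower_set cov I := lower_set_not_above cov a b.
have Ia : addable cov I a := addable_not_above cov_acyclic nba.
have Ib : addable cov I b by have := addable_not_above cov_acyclic nab; rewrite not_aboveC.
have := toggleable_diff2 toggleable lI Ia Ib ab.
rewrite (bigD1 s) //= big1 ?addr0 => [|q qs]; last first.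
  (* [s] is the only point equal or adjacent to both [a] and [b]. *)
  have [/adjacent_dist qb | ] := boolP ((q == b) || adjacent cov b q); last first.
    by rewrite negb_or => /andP[qb nbq]; rewrite toggle_diff2_eq0 ?mulr0.
  have [/adjacent_dist qa | ] := boolP ((q == a) || adjacent cov a q); last first.
    by rewrite negb_or => /andP[qa naq]; rewrite toggle_diff2C toggle_diff2_eq0 ?mulr0.
  by case/eqP: qs; apply: ord_inj; move: qa qb sa bs; clear; lia.
have low_s r : cov r s -> r = a \/ r = b.
  by move=> rs; apply: (adjacent_pred_succ sa bs); rewrite /adjacent rs orbT.
have up_s r : cov s r -> r = a \/ r = b.
  by move=> sr; apply: (adjacent_pred_succ sa bs); rewrite /adjacent sr.
case/orP: turn_s => /andP[h1 h2].
  by rewrite (toggle_diff2_peak cov_acyclic lI Ia Ib ab h1 h2 low_s) mulr1.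
by rewrite (toggle_diff2_valley lI Ia Ib ab h1 h2 up_s) mulrN1 => /eqP; rewrite oppr_eq0 => /eqP.
Qed.

Lemma toggleable_coeff_eq0 :
  (forall p : T, (forall i, (i < t.-1)%N -> p != shared i :> nat) -> d p = 0) ->
  forall q, cq q = 0.
Proof.
move=> d_shared q; pose h k := \sum_(r : T | r.+1 == k) `|cq r|.
(* [h k.+1 = |cq k|], shifted so that [h 0 = 0] supplies the left boundary value. *)
have h0 : h 0%N = 0 by rewrite /h big_pred0.
have h_at (r : T) : h r.+1 = `|cq r| by rewrite /h (big_pred1 r).
have h_out k : (n <= k)%N -> h k.+1 = 0.
  move=> nk; rewrite /h big_pred0 // => r.
  by apply/negbTE; rewrite eqSS neq_ltn (leq_trans (ltn_ord r) nk).
have [m _ m_max] := arg_maxP (fun r : T => `|cq r|) (isT : predT q).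
have h_le k : h k <= h m.+1.
  rewrite h_at; case: (pickP [pred r : T | r.+1 == k]) => [r /eqP <- | none].
    by rewrite h_at; apply: m_max.
  by rewrite /h big_pred0.
have h_sub k : h k.+1 = 0 \/ 2 * h k.+1 <= h k + h k.+2.
  have [kn | nk] := ltnP k n; last by left; exact: h_out.
  pose p : T := Ordinal kn; rewrite -[k]/(p : nat) h_at.
  have [/existsP[i /eqP Ep] | nsh] := boolP [exists i : 'I_t.-1, p == shared i :> nat].
    by left; rewrite (toggleable_coeff_shared (ltn_ord i) Ep) normr0.
  have dp0 : d p = 0.
    apply: d_shared => i it; apply: contraNneq nsh => Ep.
    by apply/existsP; exists (Ordinal it); rewrite Ep.
  right; apply: le_trans (toggleable_coeff_le cov_acyclic toggleable dp0) _.
  rewrite /h [leLHS]big_mkcond [X in _ + X]big_mkcond [X in X + _]big_mkcond -big_split /=.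
  apply: ler_sum => r _.
  case: ifP => [adj | _]; last by rewrite addr_ge0 //; case: ifP.
  have /orP[-> | ->] : (r.+1 == p) || (r.+1 == p.+2).
  - by case/orP: adj => /cov_adjacent[] ->; rewrite eqxx ?orbT.
  - by rewrite lerDl; case: ifP.
  - by rewrite lerDr; case: ifP.
have hm0 := subharmonic_max_eq0 h0 h_le h_sub; rewrite h_at in hm0.
by apply/eqP; rewrite -normr_le0 -hm0; apply: m_max.
Qed.

End FenceToggleable.

End Shared.

End Fence.

Theorem lemma4p3 (R : realType) (alpha : seq nat)
  (Ht : (2 <= size alpha)%N)
  (Hpos : all (fun k => 0 < k)%N alpha)
  (Hfirst : (2 <= head 0 alpha)%N)
  (Hlast : (2 <= last 0 alpha)%N) :
  (forall b : 'I_(size alpha).-1 -> R,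
     (forall I : JF alpha,
        \sum_(i < (size alpha).-1) b i * chi_shared R alpha i.+1 I = 0) ->
     forall i, b i = 0)
  /\
  (forall f : JF alpha -> R,
     (exists b : 'I_(size alpha).-1 -> R,
        forall I, f I = \sum_(i < (size alpha).-1) b i * chi_shared R alpha i.+1 I) ->
     in_IT R alpha f ->
     forall I, f I = 0).
Proof.
split=> [b vanish i | f [b f_sum] [_ [c [cq f_tog]]] I].
  have [_ s_lt] := shared_bounds Ht Hpos Hfirst Hlast (ltn_ord i).
  rewrite -(shared_weight_shared Ht Hpos Hfirst Hlast b (s := Ordinal (ltnW s_lt))) //.
  apply: (additive_eq0_on_lower_sets (@cov_acyclic alpha) (d := shared_weight b)) => J lJ.
  by rewrite -(sum_chi_shared b (exist _ J lJ)) vanish.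
have tog J : lower_set (cov alpha) J ->
    \sum_(q in J) shared_weight b q = c + \sum_q cq q * toggle (cov alpha) J q.
  move=> lJ; rewrite -(sum_chi_shared b (exist _ J lJ)) -f_sum f_tog.
  by congr (_ + _); apply: eq_bigr => q _; rewrite togT_toggle.
have cq0 := toggleable_coeff_eq0 Ht Hpos Hfirst Hlast tog (shared_weight_eq0 b).
have lower0 : lower_set (cov alpha) set0 by apply/lower_setP => x y _; rewrite in_set0.
have c0 : c = 0.
  by have := tog _ lower0; rewrite big_set0 big1 ?addr0 => [-> | q _]; rewrite ?cq0 ?mul0r.
by rewrite f_tog c0 add0r big1 // => q _; rewrite cq0 mul0r.
Qed.
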